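(* Let $(X,d)$ be a metric space. Then $X$ is complete if and only if $(P_{USCB}(X),H_{\rm send})$ is complete.
   Context: $X\times[0,1]$ is metrized by $\overline{d}((x,\alpha),(y,\beta))=d(x,y)+|\alpha-\beta|$. For a subset $u\subseteq X\times[0,1]$ and $\alpha\in[0,1]$ put $[u]_\alpha=\{x\in X:(x,\alpha)\in u\}$. $P_{USCB}(X)$ is the set of subsets $u\subseteq X\times[0,1]$ such that $[u]_\alpha=\bigcap_{\beta<\alpha}[u]_\beta$ for all $\alpha\in(0,1]$ and $[u]_\alpha$ is a non-empty compact subset of $X$ for all $\alpha\in[0,1]$ (each such $u$ is then a non-empty compact subset of $X\times[0,1]$). For $u,v\in P_{USCB}(X)$, $H_{\rm send}(u,v)=H(u,v)$, where $H(A,B)=\max\{\sup_{a\in A}\inf_{b\in B}\overline{d}(a,b),\sup_{b\in B}\inf_{a\in A}\overline{d}(a,b)\}$ is the Hausdorff metric on non-empty compact subsets of $X\times[0,1]$. *)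

From HB Require Import structures.
From mathcomp Require Import all_boot all_order all_algebra.
From mathcomp Require Import all_classical all_reals.
From Stdlib Require Lists.List.
Set Implicit Arguments. Unset Strict Implicit. Unset Printing Implicit Defensive.
Import Order.TTheory GRing.Theory Num.Theory.
Local Open Scope classical_set_scope.
Local Open Scope ring_scope.

Section Defs.
Variables (R : realType).

Definition is_metric (X : Type) (d : X -> X -> R) : Prop :=
  (forall x y, d x y = 0 <-> x = y) /\
  (forall x y, d x y = d y x) /\
  (forall x y z, d x z <= d x y + d y z).

Definition open_in (X : Type) (d : X -> X -> R) (U : set X) : Prop :=
  forall x, U x -> exists2 e : R, 0 < e & forall y, d x y < e -> U y.

Definition compact_in (X : Type) (d : X -> X -> R) (K : set X) : Prop :=
  forall (I : Type) (U : I -> set X), (forall i, open_in d (U i)) ->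
    (forall x, K x -> exists i, U i x) ->
    exists s : list I, forall x, K x -> exists i, Stdlib.Lists.List.In i s /\ U i x.

Definition complete_wrt (T : Type) (S : set T) (dist : T -> T -> R) : Prop :=
  forall u : nat -> T, (forall n, S (u n)) ->
    (forall e : R, 0 < e -> exists N : nat, forall m n : nat,
        (N <= m)%N -> (N <= n)%N -> dist (u m) (u n) < e) ->
    exists2 l : T, S l & forall e : R, 0 < e -> exists N : nat,
        forall n : nat, (N <= n)%N -> dist (u n) l < e.

(* the metric dbar on X x [0,1] (points represented in X * R) *)
Definition dbar (X : Type) (d : X -> X -> R) (p q : X * R) : R :=
  d p.1 q.1 + `|p.2 - q.2|.

Definition cut (X : Type) (u : set (X * R)) (alpha : R) : set X :=
  [set x | u (x, alpha)].

Definition P_USCB (X : Type) (d : X -> X -> R) (u : set (X * R)) : Prop :=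
  (forall p, u p -> 0 <= p.2 <= 1) /\
  (forall alpha : R, 0 < alpha <= 1 ->
     cut u alpha = [set x | forall beta : R, 0 <= beta < alpha -> cut u beta x]) /\
  (forall alpha : R, 0 <= alpha <= 1 ->
     (exists x, cut u alpha x) /\ compact_in d (cut u alpha)).

Definition excess (T : Type) (dist : T -> T -> R) (A B : set T) : R :=
  sup [set r | exists2 a, A a & r = inf [set s | exists2 b, B b & s = dist a b]].

Definition hausdorff (T : Type) (dist : T -> T -> R) (A B : set T) : R :=
  Num.max (excess dist A B) (excess dist B A).

Definition H_send (X : Type) (d : X -> X -> R) (u v : set (X * R)) : R :=
  hausdorff (dbar d) u v.

End Defs.

From HB Require Import structures.
From mathcomp Require Import all_boot all_order all_algebra.
From mathcomp Require Import all_classical all_reals topology normedtype lra.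
Set Implicit Arguments. Unset Strict Implicit. Unset Printing Implicit Defensive.
Import Order.TTheory GRing.Theory Num.Theory numFieldNormedType.Exports.
Local Open Scope classical_set_scope.
Local Open Scope ring_scope.

(* If X is complete, a Cauchy sequence (u n) in P_USCB(X) converges to its
   upper Kuratowski limit L, the set of limits of points a_k in u (n_k) along
   subsequences: near every point of u n, for n large, sits a point of L,
   reached by chaining points of the u (n_k) with geometrically shrinking
   steps. L is closed, so its level sets are complete, and they are totally
   bounded because the level sets of the u n are; the cut condition passes to
   L because the u n are down-closed in the level.  Conversely x |-> {x}x[0,1]
   is 1-Lipschitz into P_USCB(X), and any point of the 0-level of the limit
   of the images of a Cauchy sequence is a limit of that sequence. *)

Lemma dependent_choice_nat (S : Type) (P : nat -> S -> Prop)
    (Q : nat -> S -> S -> Prop) (a : S) :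
  P 0%N a -> (forall k x, P k x -> exists y, P k.+1 y /\ Q k x y) ->
  exists c : nat -> S, c 0%N = a /\ forall k, P k (c k) /\ Q k (c k) (c k.+1).
Proof.
move=> Pa step.
have step' (p : nat * S) : exists y, P p.1 p.2 -> P p.1.+1 y /\ Q p.1 p.2 y.
  case: (pselect (P p.1 p.2)) => [/step[y Hy]|nP]; first by exists y.
  by exists p.2 => /nP.
have [f Hf] := choice step'.
pose c := fix c k := if k is k'.+1 then f (k', c k') else a.
have Pc k : P k (c k) by elim: k => [|k IH] //=; exact: (Hf (k, c k) IH).1.
by exists c; split => // k; split; [|exact: (Hf (k, c k) (Pc k)).2].
Qed.

Lemma list_ub (disp : Order.disp_t) (U : orderType disp) (T : Type)
    (f : T -> U) (x0 : U) (l : list T) :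
  exists M, forall c, List.In c l -> (f c <= M)%O.
Proof.
elim: l => [|a l [M HM]]; first by exists x0.
by exists (Order.max (f a) M) => c /= [<-|/HM cM]; rewrite le_max ?lexx ?cM ?orbT.
Qed.

Section Reals.
Variable R : realType.

Lemma real_cauchy_cvg (s : nat -> R) :
  (forall e, 0 < e -> exists N, forall m n, (N <= m)%N -> (N <= n)%N -> `|s m - s n| < e) ->
  exists l, forall e, 0 < e -> exists N, forall n, (N <= n)%N -> `|s n - l| < e.
Proof.
move=> s_cauchy; have : cvg (s @ \oo).
  apply/cauchy_cvgP/cauchy_ballP => e /s_cauchy[N HN]; rewrite near_simpl.
  exists ([set n | (N <= n)%N], [set n | (N <= n)%N]); first by split; exists N.
  by move=> [m n] [/= Nm Nn]; rewrite /ball /= distrC; apply: HN.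
move=> /cvgrPdist_lt s_cvg; exists (lim (s @ \oo)) => e /s_cvg[N _ HN].
by exists N => n Nn; rewrite distrC; apply: HN.
Qed.

Lemma exp2N_gt0 k : 0 < 2 ^- k :> R.
Proof. by rewrite invr_gt0 exprn_gt0. Qed.

Lemma exp2NS k : 2 ^- k.+1 = 2 ^- k / 2 :> R.
Proof. by rewrite exprS invfM mulrC. Qed.

Lemma exp2N_le k j : (k <= j)%N -> 2 ^- j <= 2 ^- k :> R.
Proof. by move=> kj; rewrite -!exprVn; apply: ler_wiXn2l => //; lra. Qed.

Lemma exp2N_small (c e : R) : 0 < e -> exists k, c * 2 ^- k < e.
Proof.
move=> e0; have [c0|c0] := lerP c 0.
  by exists 0%N; rewrite expr0 invr1 mulr1; lra.
have := @archi_boundP R (c / e); rewrite ltW ?divr_gt0 // => /(_ isT).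
set n := Num.Def.archi_bound _ => ce_lt_n; exists n.
have n_lt_2n : n%:R < 2 ^+ n :> R by rewrite -natrX ltr_nat ltn_expl.
rewrite ltr_pdivrMr ?exprn_gt0 // -ltr_pdivrMl // mulrC.
exact: lt_trans ce_lt_n n_lt_2n.
Qed.

End Reals.

Section SequencesAndSets.
Variables (R : realType) (T : Type) (rho : T -> T -> R).

Definition cauchy_in (s : nat -> T) := forall e, 0 < e -> exists N, forall m n,
  (N <= m)%N -> (N <= n)%N -> rho (s m) (s n) < e.

Definition cvg_in (s : nat -> T) (l : T) := forall e, 0 < e -> exists N, forall n,
  (N <= n)%N -> rho (s n) l < e.

Definition bounded_in (K : set T) := exists M, forall x y, K x -> K y -> rho x y <= M.

Definition totally_bounded_in (K : set T) := forall e, 0 < e -> exists s : list T,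
  forall x, K x -> exists c, List.In c s /\ rho c x < e.

Definition setdist (a : T) (B : set T) := inf [set r | exists2 b, B b & r = rho a b].

Definition upper_limit (A : nat -> set T) := [set x | forall e, 0 < e -> forall N,
  exists2 n, (N <= n)%N & exists2 a, A n a & rho a x < e].

Lemma cauchy_fast_subseq (s : nat -> T) e : cauchy_in s -> 0 < e ->
  exists N, forall n, (N <= n)%N -> exists m : nat -> nat, [/\ m 0%N = n,
    forall k, (k <= m k)%N & forall k, rho (s (m k)) (s (m k.+1)) < e * 2 ^- k].
Proof.
move=> s_cauchy e0.
have [Nf HNf] := choice (fun k => s_cauchy _ (mulr_gt0 e0 (exp2N_gt0 R k))).
exists (Nf 0%N) => n Nn.
pose m := fix m k := if k is k'.+1 then maxn (m k').+1 (Nf k) else n.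
have Nf_le_m k : (Nf k <= m k)%N by case: k => [|k] //=; rewrite leq_maxr.
have m_lt k : (m k < m k.+1)%N by rewrite /= leq_maxl.
exists m; split => // [k|k].
  by elim: k => [|k IH] //; exact: leq_ltn_trans IH (m_lt k).
by apply: HNf => //; exact: leq_trans (Nf_le_m k) (ltnW (m_lt k)).
Qed.

Lemma excessE (A B : set T) :
  excess rho A B = sup [set r | exists2 a, A a & r = setdist a B].
Proof. by []. Qed.

Lemma hausdorffC (A B : set T) : hausdorff rho A B = hausdorff rho B A.
Proof. by rewrite /hausdorff maxC. Qed.

End SequencesAndSets.

Definition has_finite_subcover (T I : Type) (U : I -> set T) (S : set T) :=
  exists l : list I, forall x, S x -> exists i, List.In i l /\ U i x.

Section PseudoMetric.
Variables (R : realType) (T : Type) (rho : T -> T -> R).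
Hypothesis rho0 : forall x, rho x x = 0.
Hypothesis rhoC : forall x y, rho x y = rho y x.
Hypothesis rhoT : forall x y z, rho x z <= rho x y + rho y z.

Lemma rho_ge0 x y : 0 <= rho x y.
Proof. by have := rhoT x y x; rewrite rho0 (rhoC y x); lra. Qed.

Lemma open_ball c e : open_in rho [set y | rho c y < e].
Proof.
move=> y /= cy; exists (e - rho c y) => [|z yz]; first by lra.
by have /= := rhoT c y z; lra.
Qed.

Lemma compact_totally_bounded K : compact_in rho K -> totally_bounded_in rho K.
Proof.
move=> cK e e0; apply: (cK T (fun c => [set y | rho c y < e])) => [c|x _].
  exact: open_ball.
by exists x; rewrite /= rho0.
Qed.

Lemma totally_bounded_bounded K : totally_bounded_in rho K -> bounded_in rho K.
Proof.
move=> /(_ 1 ltr01)[[|c0 s] net].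
  by exists 0 => x y /net[c []].
have [M HM] := list_ub (rho c0) 0 (c0 :: s).
exists (2 * M + 2) => x y /net[c [cs cx]] /net[c' [c's c'y]].
have := HM _ cs; have := HM _ c's; have := rhoT x c y; have := rhoT c c0 y.
have := rhoT c0 c' y; rewrite (rhoC x c) (rhoC c c0); lra.
Qed.

Lemma setdist_le a B b : B b -> setdist rho a B <= rho a b.
Proof.
move=> Bb; apply: ge_inf; last by exists b.
by exists 0 => _ [b' _ ->]; exact: rho_ge0.
Qed.

Lemma setdist_le_excess A B a : bounded_in rho A -> B !=set0 -> A a ->
  setdist rho a B <= excess rho A B.
Proof.
move=> [M HM] [b0 Bb0] Aa; rewrite excessE; apply: ub_le_sup; last by exists a.
exists (M + rho a b0) => _ [a' Aa' ->]; have := setdist_le a' Bb0.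
by have := HM _ _ Aa' Aa; have := rhoT a' a b0; lra.
Qed.

Lemma excess_le A B r : A !=set0 ->
  (forall a, A a -> exists2 b, B b & rho a b <= r) -> excess rho A B <= r.
Proof.
move=> [a0 Aa0] near; rewrite excessE; apply: ge_sup; first by exists (setdist rho a0 B), a0.
by move=> _ [a /near[b Bb ab] ->]; exact: le_trans (setdist_le a Bb) ab.
Qed.

Lemma hausdorff_le A B r : A !=set0 -> B !=set0 ->
  (forall a, A a -> exists2 b, B b & rho a b <= r) ->
  (forall b, B b -> exists2 a, A a & rho b a <= r) ->
  hausdorff rho A B <= r.
Proof. by move=> nA nB AB BA; rewrite /hausdorff ge_max !excess_le. Qed.

Lemma hausdorff_lt_near A B a r : bounded_in rho A -> B !=set0 -> A a ->
  hausdorff rho A B < r -> exists2 b, B b & rho a b < r.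
Proof.
move=> bA nB Aa; rewrite /hausdorff gt_max => /andP[+ _].
move=> /(le_lt_trans (setdist_le_excess bA nB Aa)) /inf_lt[|_ [b Bb ->]]; last by exists b.
by case: nB => b0 Bb0; exists (rho a b0), b0.
Qed.

Lemma compact_cluster K (s : nat -> T) : compact_in rho K -> (forall n, K (s n)) ->
  exists2 y, K y & forall e, 0 < e -> forall N, exists2 n, (N <= n)%N & rho (s n) y < e.
Proof.
move=> cK Ks; apply: contrapT => no_cluster.
have escape y : exists p : R * nat, K y ->
    0 < p.1 /\ forall n, (p.2 <= n)%N -> p.1 <= rho (s n) y.
  have [Ky|nKy] := pselect (K y); last by exists (1, 0%N) => /nKy.
  have /existsNP[e /not_implyP[e0 /existsNP[N HN]]] :
      ~ forall e, 0 < e -> forall N, exists2 n, (N <= n)%N & rho (s n) y < e.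
    by move=> cl; apply: no_cluster; exists y.
  exists (e, N) => _; split => // n Nn /=; rewrite leNgt; apply/negP => sny.
  by apply: HN; exists n.
have [g Hg] := choice escape.
have balls_open y : open_in rho (fun z => K y /\ rho y z < (g y).1).
  move=> x [Ky yx]; have [r r0 Hr] := open_ball yx.
  by exists r => // z /Hr.
have balls_cover x : K x -> exists y, K y /\ rho y x < (g y).1.
  by move=> Kx; exists x; rewrite rho0; case: (Hg x Kx).
have [l Hl] := cK T _ balls_open balls_cover.
have [M HM] := list_ub (fun y => (g y).2) 0%N l.
have [y [yl [Ky ysM]]] := Hl _ (Ks M).
have [_ far] := Hg y Ky; have := far M (HM _ yl); rewrite rhoC; lra.
Qed.

Lemma has_finite_subcoverS I (U : I -> set T) S S' :
  S' `<=` S -> has_finite_subcover U S -> has_finite_subcover U S'.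
Proof. by move=> S'S [l Hl]; exists l => x /S'S /Hl. Qed.

Lemma has_finite_subcover_pieces I J (U : I -> set T) (B : J -> set T) (cs : list J) S :
  (forall x, S x -> exists c, List.In c cs /\ B c x) ->
  (forall c, List.In c cs -> has_finite_subcover U (S `&` B c)) ->
  has_finite_subcover U S.
Proof.
elim: cs S => [|c cs IH] S Scov pieces.
  by exists nil => x /Scov[c [[]]].
have [l1 H1] := pieces c (or_introl erefl).
have [l2 H2] : has_finite_subcover U (S `&` ~` B c).
  apply: IH => [x [/Scov[c' [[<-|c'cs] Bx]] nBx]|c' c'cs]; first by [].
    by exists c'.
  by apply: has_finite_subcoverS (pieces c' (or_intror c'cs)) => x [[]].
exists (l1 ++ l2)%list => x Sx; have [Bx|nBx] := pselect (B c x).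
  by have [i [il Ui]] := H1 x (conj Sx Bx); exists i; rewrite List.in_app_iff; auto.
by have [i [il Ui]] := H2 x (conj Sx nBx); exists i; rewrite List.in_app_iff; auto.
Qed.

Lemma no_finite_subcover_ball K I (U : I -> set T) S e :
  totally_bounded_in rho K -> S `<=` K -> ~ has_finite_subcover U S -> 0 < e ->
  exists c, ~ has_finite_subcover U (S `&` [set y | rho c y < e]).
Proof.
move=> tbK SK nS /tbK[cs net]; apply: contrapT => /forallNP all_pieces.
apply: nS; apply: (has_finite_subcover_pieces (B := fun c => [set y | rho c y < e]) (cs := cs)).
  by move=> x /SK /net.
by move=> c _; apply: contrapT; exact: all_pieces.
Qed.

(* Nested sets without finite subcover and of diameter below [2 ^- k] shrink
   to a limit point, one of whose open neighbourhoods then covers them. *)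
Lemma totally_bounded_complete_compact K :
  totally_bounded_in rho K -> complete_wrt K rho -> compact_in rho K.
Proof.
move=> tbK cK I U Uo Ucov; apply: contrapT => nK.
pose P (k : nat) (S : set T) := S `<=` K /\ ~ has_finite_subcover U S.
pose Q (k : nat) (S S' : set T) :=
  S' `<=` S /\ forall x y, S' x -> S' y -> rho x y < 2 * 2 ^- k.
have [Sq [_ HSq]] : exists Sq, Sq 0%N = K /\ forall k, P k (Sq k) /\ Q k (Sq k) (Sq k.+1).
  apply: dependent_choice_nat => [|k S [SK nS]]; first by split.
  have [c nSc] := no_finite_subcover_ball tbK SK nS (exp2N_gt0 R k).
  exists (S `&` [set y | rho c y < 2 ^- k]); split; first by split => // x [/SK].
  split=> [x []//|x y [_ /= cx] [_ /= cy]].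
  by have := rhoT x c y; rewrite rhoC in cx; lra.
have Sq_decr k j : (k <= j)%N -> Sq j `<=` Sq k.
  move=> /subnK <-; elim: (j - k)%N => [|n IHn] //= x.
  by rewrite addSn => /(HSq _).2.1 /IHn.
have Sq_neq0 k : exists x, Sq k x.
  apply: contrapT => /forallNP empty; apply: (HSq k).1.2.
  by exists nil => y /empty.
have [x Sx] := choice Sq_neq0.
have x_cauchy : cauchy_in rho x.
  move=> e e0; have [j Hj] := exp2N_small 2 e0; exists j.+1 => m n jm jn.
  have := (HSq j).2.2 _ _ (Sq_decr _ _ jm _ (Sx m)) (Sq_decr _ _ jn _ (Sx n)); lra.
have [y Ky x_y] := cK x (fun k => (HSq k).1.1 _ (Sx k)) x_cauchy.
have [i Ui] := Ucov _ Ky; have [r r0 Hr] := Uo i y Ui.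
have [j Hj] := exp2N_small 4 r0; have [N HN] := x_y _ (divr_gt0 r0 (ltr0Sn _ 1)).
apply: (HSq j.+1).1.2; exists [:: i] => z Sz; exists i; split; first by left.
have Sjx : Sq j.+1 (x (maxn j.+1 N)) by apply: Sq_decr (Sx _); rewrite leq_maxl.
have := (HSq j).2.2 _ _ Sjx Sz; have := HN _ (leq_maxr j.+1 N).
move=> xy xz; apply: Hr; have := rhoT y (x (maxn j.+1 N)) z; rewrite (rhoC y (x _)); lra.
Qed.

Lemma upper_limit_closed A x :
  (forall e, 0 < e -> exists2 p, upper_limit rho A p & rho p x < e) ->
  upper_limit rho A x.
Proof.
move=> near_x e e0 N; have e20 : 0 < e / 2 by rewrite divr_gt0.
have [p Ap px] := near_x _ e20; have [n Nn [a Ana ap]] := Ap _ e20 N.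
by exists n => //; exists a => //; have := rhoT a p x; lra.
Qed.

Lemma geometric_steps_dist (c : nat -> T) e :
  (forall k, rho (c k) (c k.+1) < e * 2 ^- k) ->
  forall i m, (i <= m)%N -> rho (c i) (c m) <= 2 * e * 2 ^- i.
Proof.
move=> steps i m /subnKC <-.
have e0 : 0 < e.
  by have := steps 0%N; rewrite expr0 invr1 mulr1; have := rho_ge0 (c 0%N) (c 1%N); lra.
suff : rho (c i) (c (i + (m - i))%N) <= 2 * e * 2 ^- i - 2 * e * 2 ^- (i + (m - i)).
  by have := mulr_gt0 e0 (exp2N_gt0 R (i + (m - i))); lra.
elim: (m - i)%N => [|k IH]; first by rewrite addn0 rho0; lra.
rewrite addnS exp2NS; have := rhoT (c i) (c (i + k)%N) (c (i + k).+1).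
by have := steps (i + k)%N; lra.
Qed.

Lemma geometric_steps_cauchy (c : nat -> T) e :
  (forall k, rho (c k) (c k.+1) < e * 2 ^- k) -> cauchy_in rho c.
Proof.
move=> steps r r0; have [j Hj] := exp2N_small (4 * e) r0; exists j => m n jm jn.
have := geometric_steps_dist steps jm; have := geometric_steps_dist steps jn.
by have := rhoT (c m) (c j) (c n); rewrite (rhoC (c m) (c j)); lra.
Qed.

Section HausdorffLimit.
Hypothesis T_complete : complete_wrt setT rho.
Variable A : nat -> set T.
Hypothesis A_neq0 : forall n, A n !=set0.
Hypothesis A_bounded : forall n, bounded_in rho (A n).
Hypothesis A_cauchy : cauchy_in (hausdorff rho) A.

Lemma upper_limit_near e : 0 < e -> exists N, forall n, (N <= n)%N ->
  forall x, upper_limit rho A x -> exists2 a, A n a & rho x a < e.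
Proof.
move=> e0; have e20 : 0 < e / 2 by rewrite divr_gt0.
have [N HN] := A_cauchy e20; exists N => n Nn x Ax.
have [m Nm [a Ama ax]] := Ax _ e20 N.
have [b Anb ab] := hausdorff_lt_near (A_bounded m) (A_neq0 n) Ama (HN _ _ Nm Nn).
by exists b => //; have := rhoT x a b; rewrite (rhoC x a); lra.
Qed.

Lemma near_upper_limit e : 0 < e -> exists N, forall n, (N <= n)%N ->
  forall a, A n a -> exists2 x, upper_limit rho A x & rho a x <= 2 * e.
Proof.
move=> e0; have [N HN] := cauchy_fast_subseq A_cauchy e0; exists N => n Nn a Ana.
have [m [m0 m_ge fast]] := HN n Nn.
have [c [c0 Hc]] : exists c : nat -> T, c 0%N = a /\
    forall k, A (m k) (c k) /\ rho (c k) (c k.+1) < e * 2 ^- k.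
  apply: (dependent_choice_nat (P := fun k => A (m k))
    (Q := fun k x y => rho x y < e * 2 ^- k)) => [|k x Amx]; first by rewrite m0.
  have [y Ay xy] := hausdorff_lt_near (A_bounded _) (A_neq0 _) Amx (fast k).
  by exists y.
have c_steps k : rho (c k) (c k.+1) < e * 2 ^- k by case: (Hc k).
have [x _ c_x] := T_complete (fun _ => I) (geometric_steps_cauchy c_steps).
exists x => [r r0 K|].
  have [M HM] := c_x r r0; exists (m (maxn K M)).
    exact: leq_trans (leq_maxl K M) (m_ge _).
  by exists (c (maxn K M)); [case: (Hc (maxn K M)) | apply: HM; rewrite leq_maxr].
apply/ler_addgt0Pr => r /c_x[M HM]; have := HM M (leqnn M).
have := geometric_steps_dist c_steps (leq0n M); rewrite c0 expr0 invr1 mulr1.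
by have := rhoT a (c M) x; lra.
Qed.

Lemma upper_limit_neq0 : upper_limit rho A !=set0.
Proof.
have [N HN] := near_upper_limit ltr01; have [a Aa] := A_neq0 N.
by have [x Ax _] := HN N (leqnn N) a Aa; exists x.
Qed.

Lemma hausdorff_upper_limit e : 0 < e -> exists N, forall n, (N <= n)%N ->
  hausdorff rho (A n) (upper_limit rho A) < e.
Proof.
move=> e0; have e40 : 0 < e / 4 by rewrite divr_gt0.
have e20 : 0 < e / 2 by rewrite divr_gt0.
have [N1 H1] := near_upper_limit e40; have [N2 H2] := upper_limit_near e20.
exists (maxn N1 N2) => n; rewrite geq_max => /andP[n1 n2].
apply: (@le_lt_trans _ _ (e / 2)); last by lra.
apply: hausdorff_le => //; first exact: upper_limit_neq0.
  by move=> a /(H1 _ n1)[x Ax ax]; exists x => //; lra.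
by move=> x /(H2 _ n2)[a Aa xa]; exists a => //; lra.
Qed.

End HausdorffLimit.
End PseudoMetric.

Section ProductMetric.
Variables (R : realType) (X : Type) (d : X -> X -> R).
Hypothesis d0 : forall x, d x x = 0.
Hypothesis dC : forall x y, d x y = d y x.
Hypothesis dT : forall x y z, d x z <= d x y + d y z.

Lemma dbar0 p : dbar d p p = 0.
Proof. by rewrite /dbar d0 subrr normr0 addr0. Qed.

Lemma dbarC p q : dbar d p q = dbar d q p.
Proof. by rewrite /dbar dC distrC. Qed.

Lemma dbar_triangle p q r : dbar d p r <= dbar d p q + dbar d q r.
Proof. by rewrite /dbar; have := dT p.1 q.1 r.1; have := ler_distD q.2 p.2 r.2; lra. Qed.

Lemma dist_le_dbar p q : d p.1 q.1 <= dbar d p q.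
Proof. by rewrite /dbar lerDl. Qed.

Lemma level_dist_le_dbar p q : `|p.2 - q.2| <= dbar d p q.
Proof. by rewrite /dbar lerDr (rho_ge0 d0 dC dT). Qed.

Lemma dbar_level x y a : dbar d (x, a) (y, a) = d x y.
Proof. by rewrite /dbar subrr normr0 addr0. Qed.

Lemma dbar_point x a b : dbar d (x, a) (x, b) = `|a - b|.
Proof. by rewrite /dbar d0 add0r. Qed.

Lemma complete_dbar : complete_wrt setT d -> complete_wrt setT (dbar d).
Proof.
move=> X_complete s _ s_cauchy.
have [x _ s1_x] : exists2 x, True & cvg_in d (fun n => (s n).1) x.
  apply: X_complete => // e /s_cauchy[N HN]; exists N => m n Nm Nn.
  exact: le_lt_trans (dist_le_dbar _ _) (HN _ _ Nm Nn).
have [|r s2_r] := @real_cauchy_cvg R (fun n => (s n).2).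
  move=> e /s_cauchy[N HN]; exists N => m n Nm Nn.
  exact: le_lt_trans (level_dist_le_dbar _ _) (HN _ _ Nm Nn).
exists (x, r) => // e e0; have e20 : 0 < e / 2 by rewrite divr_gt0.
have [N1 H1] := s1_x _ e20; have [N2 H2] := s2_r _ e20.
exists (maxn N1 N2) => n; rewrite geq_max => /andP[n1 n2].
by have := H1 n n1; have := H2 n n2; rewrite /dbar /=; lra.
Qed.

Section USCB.
Variable u : set (X * R).
Hypothesis u_USCB : P_USCB d u.

Lemma USCB_level p : u p -> 0 <= p.2 <= 1.
Proof. by case: u_USCB => + _; apply. Qed.

Lemma USCB_down x a b : u (x, a) -> 0 <= b <= a -> u (x, b).
Proof.
move=> uxa /andP[b0 ba]; have /= /andP[a0 a1] := USCB_level uxa.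
have [ab|ab] := leP a b; first by have -> : b = a by apply/le_anti; rewrite ab ba.
case: u_USCB => _ [cut_inter _]; have : cut u a x by [].
by rewrite cut_inter ?(le_lt_trans b0 ab) ?a1 // => /(_ b); rewrite b0 ab; apply.
Qed.

Lemma USCB_cut_compact a : 0 <= a <= 1 -> compact_in d (cut u a).
Proof. by case: u_USCB => _ [_ cuts] /cuts[]. Qed.

Lemma USCB_cut_neq0 a : 0 <= a <= 1 -> exists x, u (x, a).
Proof. by case: u_USCB => _ [_ cuts] /cuts[]. Qed.

Lemma USCB_neq0 : u !=set0.
Proof. by have [|x ux] := @USCB_cut_neq0 0; [rewrite lexx ler01 | exists (x, 0)]. Qed.

Lemma USCB_bounded : bounded_in (dbar d) u.
Proof.
have cut0 : compact_in d (cut u 0) by apply: USCB_cut_compact; rewrite lexx ler01.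
have [M HM] := totally_bounded_bounded dC dT (compact_totally_bounded d0 dT cut0).
exists (M + 1).
move=> [x a] [y b] uxa uyb; have /= /andP[a0 a1] := USCB_level uxa.
have /= /andP[b0 b1] := USCB_level uyb.
have down0 z c : u (z, c) -> cut u 0 z.
  by move=> uzc; have /andP[c0 _] := USCB_level uzc; apply: USCB_down uzc _; rewrite lexx c0.
have := HM x y (down0 _ _ uxa) (down0 _ _ uyb).
have : `|a - b| <= 1 by rewrite ler_norml /=; apply/andP; split; lra.
by rewrite /dbar /=; lra.
Qed.

End USCB.

Definition column (x : X) : set (X * R) := [set p | p.1 = x /\ 0 <= p.2 <= 1].

Lemma column_neq0 x : column x !=set0.
Proof. by exists (x, 0); split => //; rewrite lexx ler01. Qed.

Lemma column_USCB x : P_USCB d (column x).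
Proof.
split=> [p []//|]; split=> [a /andP[a0 a1]|a a01].
  apply/seteqP; split=> y /=; rewrite /cut /column /=.
    by move=> [-> _] b /andP[b0 ba]; split => //; apply/andP; split; lra.
  move=> /(_ 0); rewrite lexx a0 => /(_ isT)[-> _].
  by split => //; apply/andP; split; lra.
split; first by exists x; split.
move=> I U _ Ucov; have [i Ui] := Ucov x (conj erefl a01).
by exists [:: i] => y [/= -> _]; exists i; split => //; left.
Qed.

Lemma hausdorff_column x y : H_send d (column x) (column y) <= d x y.
Proof.
apply: (hausdorff_le dbar0 dbarC dbar_triangle (column_neq0 x) (column_neq0 y)).
  by move=> [z a] [/= -> a01]; exists (y, a) => //; rewrite dbar_level.
by move=> [z a] [/= -> a01]; exists (x, a) => //; rewrite dbar_level dC.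
Qed.

Lemma complete_of_USCB_complete :
  complete_wrt (P_USCB d) (H_send d) -> complete_wrt setT d.
Proof.
move=> P_complete s _ s_cauchy.
have [|l l_USCB s_l] := P_complete (column \o s) (fun n => column_USCB _).
  move=> e /s_cauchy[N HN]; exists N => m n Nm Nn.
  exact: le_lt_trans (hausdorff_column _ _) (HN _ _ Nm Nn).
have [|y ly] := USCB_cut_neq0 l_USCB (_ : 0 <= 0 <= 1); first by rewrite lexx ler01.
exists y => // e /s_l[N HN]; exists N => n /HN; rewrite /H_send hausdorffC.
move=> /(hausdorff_lt_near dbar0 dbarC dbar_triangle (USCB_bounded l_USCB) (column_neq0 _) ly).
by move=> [[z a] [/= -> _]]; rewrite dC; apply: le_lt_trans (dist_le_dbar _ _).
Qed.

Section UpperLimit.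
Hypothesis X_complete : complete_wrt setT d.
Variable u : nat -> set (X * R).
Hypothesis u_USCB : forall n, P_USCB d (u n).
Hypothesis u_cauchy : cauchy_in (H_send d) u.

Let L := upper_limit (dbar d) u.
Let u_neq0 n : u n !=set0 := USCB_neq0 (u_USCB n).
Let u_bounded n : bounded_in (dbar d) (u n) := USCB_bounded (u_USCB n).

Lemma limit_level p : L p -> 0 <= p.2 <= 1.
Proof.
move=> Lp; apply/andP; split; apply/ler_addgt0Pr => e /(Lp e)/(_ 0%N)[n _ [a una ap]];
  have := le_lt_trans (level_dist_le_dbar a p) ap; rewrite ltr_norml;
  have /andP := USCB_level (u_USCB n) una; lra.
Qed.

Lemma limit_down x a b : L (x, a) -> 0 <= b <= a -> L (x, b).
Proof.
move=> Lxa /andP[b0 ba] e e0 N; have [n Nn [[z c] unzc zc_xa]] := Lxa e e0 N.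
exists n => //; have /= /andP[c0 _] := USCB_level (u_USCB n) unzc.
have [cb|bc] := leP c b.
  exists (z, c) => //; move: zc_xa; rewrite /dbar /=.
  by rewrite !ler0_norm ?subr_le0 //; [lra | exact: le_trans ba].
exists (z, b); first by apply: (USCB_down (u_USCB n) unzc); rewrite b0 ltW.
by rewrite dbar_level; apply: le_lt_trans zc_xa; exact: (dist_le_dbar (z, c) (x, a)).
Qed.

Lemma limit_up x a : 0 < a -> (forall b, 0 <= b < a -> L (x, b)) -> L (x, a).
Proof.
move=> a0 below; apply: (upper_limit_closed dbar_triangle) => e e0.
have [ae|ea] := lerP a (e / 2).
  exists (x, 0); first by apply: below; rewrite lexx.
  by rewrite dbar_point sub0r normrN gtr0_norm //; lra.
exists (x, a - e / 2); first by apply: below; apply/andP; split; lra.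
by rewrite dbar_point addrAC subrr add0r normrN gtr0_norm; lra.
Qed.

Lemma limit_cut_closed (s : nat -> X) y a :
  (forall k, L (s k, a)) -> cvg_in d s y -> L (y, a).
Proof.
move=> Ls s_y; apply: (upper_limit_closed dbar_triangle) => e /s_y[N HN].
by exists (s N, a); [exact: Ls | rewrite dbar_level; apply: HN].
Qed.

Lemma limit_cut_compact a : compact_in d (cut L a).
Proof.
apply: (totally_bounded_complete_compact dC dT) => [e e0|s Ls s_cauchy].
  have e20 : 0 < e / 2 by rewrite divr_gt0.
  have [N HN] := upper_limit_near dbar0 dbarC dbar_triangle u_neq0 u_bounded u_cauchy e20.
  have cut0 : compact_in d (cut (u N) 0).
    by apply: (USCB_cut_compact (u_USCB N)); rewrite lexx ler01.
  have [cs net] := compact_totally_bounded d0 dT cut0 e20.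
  exists cs => x Lxa; have [[z b] uNzb xa_zb] := HN N (leqnn N) _ Lxa.
  have [|c [ccs cz]] := net z.
    have /= /andP[b0 _] := USCB_level (u_USCB N) uNzb.
    by apply: (USCB_down (u_USCB N) uNzb); rewrite lexx b0.
  exists c; split => //; have := dist_le_dbar (x, a) (z, b).
  by have := dT c z x; rewrite (dC z x) /=; lra.
have [y _ s_y] := X_complete (fun _ => I) s_cauchy.
by exists y => //; exact: limit_cut_closed Ls s_y.
Qed.

Lemma limit_top : exists y, L (y, 1).
Proof.
have approx k : exists q, L q /\ 1 - 2 ^- k <= q.2.
  have e0 : 0 < 2 ^- k / 2 :> R by rewrite divr_gt0 ?exp2N_gt0.
  have [N HN] := near_upper_limit dbar0 dbarC dbar_triangle (complete_dbar X_complete)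
    u_neq0 u_bounded u_cauchy e0.
  have [|x1 ux1] := USCB_cut_neq0 (u_USCB N) (_ : 0 <= 1 <= 1); first by rewrite ler01 lexx.
  have [q Lq x1q] := HN N (leqnn N) _ ux1; exists q; split => //.
  have := level_dist_le_dbar (x1, 1) q; rewrite ler_norml /=; lra.
have [q Hq] := choice approx.
have Lq0 k : cut L 0 (q k).1.
  case: (Hq k) => + _; case: (q k) => x a Lxa /=.
  by have /andP[a0 _] := limit_level Lxa; apply: (limit_down Lxa); rewrite lexx a0.
have [y _ cluster] := compact_cluster d0 dC dT (@limit_cut_compact 0) Lq0.
exists y; apply: (upper_limit_closed dbar_triangle) => e e0.
have [j Hj] := exp2N_small 2 e0; have [k jk qky] := cluster _ (divr_gt0 e0 (ltr0Sn _ 1)) j.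
have [Lqk qk1] := Hq k; exists (q k) => //; have /andP[_ qk_le1] := limit_level Lqk.
rewrite /dbar /= distrC ger0_norm ?subr_ge0 //.
by have := exp2N_le R jk; lra.
Qed.

Lemma limit_USCB : P_USCB d L.
Proof.
split; first exact: limit_level.
split=> [a /andP[a0 a1]|a /andP[a0 a1]].
  apply/seteqP; split=> x /=; last exact: limit_up.
  by move=> Lxa b /andP[b0 ba]; apply: (limit_down Lxa); rewrite b0 ltW.
split; last exact: limit_cut_compact.
by have [y Ly1] := limit_top; exists y; apply: (limit_down Ly1); rewrite a0 a1.
Qed.

End UpperLimit.

Lemma USCB_complete_of_complete :
  complete_wrt setT d -> complete_wrt (P_USCB d) (H_send d).
Proof.
move=> X_complete u u_USCB u_cauchy; exists (upper_limit (dbar d) u).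
  exact: limit_USCB.
exact: (hausdorff_upper_limit dbar0 dbarC dbar_triangle (complete_dbar X_complete)
  (fun n => USCB_neq0 (u_USCB n)) (fun n => USCB_bounded (u_USCB n)) u_cauchy).
Qed.

End ProductMetric.

Theorem theorem5p13 (R : realType) (X : Type) (d : X -> X -> R) :
  is_metric d ->
  (complete_wrt [set: X] d <-> complete_wrt (P_USCB d) (H_send d)).
Proof.
move=> [d_eq0 [dC dT]]; have d0 x : d x x = 0 by apply/d_eq0.
split; [exact: USCB_complete_of_complete | exact: complete_of_USCB_complete].
Qed.
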